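(* Let $\alpha\in(0,1)$, $n\ge1$, and let $(x_{i1},x_{i2},y_i)\in\mathbb R^3$, $i=1,\dots,n$. Suppose that $$\frac1n\sum_{i=1}^n\mathrm S^{\rm Q}_{\alpha,\theta}(x_{i1},y_i)\le\frac1n\sum_{i=1}^n\mathrm S^{\rm Q}_{\alpha,\theta}(x_{i2},y_i)$$ for every $\theta\in\{x_{11},x_{12},y_1,\dots,x_{n1},x_{n2},y_n\}$. Then the same inequality holds for every $\theta\in\mathbb R$, and consequently $\frac1n\sum_{i=1}^n\mathrm S(x_{i1},y_i)\le\frac1n\sum_{i=1}^n\mathrm S(x_{i2},y_i)$ for every $\mathrm S\in\mathcal S^{\rm Q}_\alpha$ (i.e. the empirical forecast $(x_{i1})_i$ dominates $(x_{i2})_i$ for $\alpha$-quantile prediction).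
   Context: $\mathcal S^{\rm Q}_\alpha$ is the class of all scoring functions $\mathrm S(x,y)=(\mathbb 1(y<x)-\alpha)(g(x)-g(y))$ with $g:\mathbb R\to\mathbb R$ left-continuous and non-decreasing. The elementary quantile scoring function is $\mathrm S^{\rm Q}_{\alpha,\theta}(x,y)=(\mathbb 1(y<x)-\alpha)(\mathbb 1(\theta<x)-\mathbb 1(\theta<y))$, i.e. it equals $1-\alpha$ if $y\le\theta<x$, $\alpha$ if $x\le\theta<y$, and $0$ otherwise. *)

From Stdlib Require Import Reals Lra Lia.
Open Scope R_scope.

Definition ind_lt (a b : R) : R := if Rlt_dec a b then 1 else 0.

Definition score_g (alpha : R) (g : R -> R) (x y : R) : R :=
  (ind_lt y x - alpha) * (g x - g y).

Definition SQ (alpha theta : R) (x y : R) : R :=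
  (ind_lt y x - alpha) * (ind_lt theta x - ind_lt theta y).

Definition nondecreasing (g : R -> R) : Prop :=
  forall a b, a <= b -> g a <= g b.

Definition left_continuous (g : R -> R) : Prop :=
  forall x eps, 0 < eps ->
    exists delta, 0 < delta /\
      forall z, x - delta < z <= x -> Rabs (g z - g x) < eps.

Definition in_SQ_class (alpha : R) (S : R -> R -> R) : Prop :=
  exists g, nondecreasing g /\ left_continuous g /\
    forall x y, S x y = score_g alpha g x y.

Definition emp_mean (n : nat) (f : nat -> R) : R :=
  / INR n * sum_f_R0 f (pred n).

(* Only the values of g at the finitely many data points matter.  On those
   points a nondecreasing g is a constant plus a nonnegative combination of
   step functions z |-> 1(theta < z), and the score difference is linear in g
   and vanishes on constants, so dominance for every elementary score gives
   dominance for every score of the class.  An elementary score with an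
   arbitrary threshold theta coincides on the data with the one whose
   threshold is the largest data point <= theta (or vanishes if there is none),
   which reduces the first claim to the thresholds that are data points. *)

From Stdlib Require Import Reals.
From Stdlib Require Import Lra Lia List Classical.
Open Scope R_scope.

Lemma ind_lt_gt (t z : R) : t < z -> ind_lt t z = 1.
Proof. unfold ind_lt; destruct (Rlt_dec t z); [easy | lra]. Qed.

Lemma ind_lt_le (t z : R) : z <= t -> ind_lt t z = 0.
Proof. unfold ind_lt; destruct (Rlt_dec t z); [lra | easy]. Qed.

Lemma exists_max_in_list (P : R -> Prop) (l : list R) :
  (forall z, In z l -> ~ P z) \/
  exists p, In p l /\ P p /\ forall z, In z l -> P z -> z <= p.
Proof.
  induction l as [|a l [IH | (p & Hp & HPp & Hmax)]]; [left; easy| |].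
  - destruct (classic (P a)) as [HPa | HPa].
    + right; exists a; repeat split; [now left | easy |].
      intros z [<- | Hz] HPz; [lra | now destruct (IH z Hz)].
    + left; intros z [<- | Hz]; auto.
  - destruct (classic (P a)) as [HPa | HPa]; [destruct (Rle_dec a p) |].
    + right; exists p; repeat split; [now right | easy |].
      intros z [<- | Hz] HPz; auto.
    + right; exists a; repeat split; [now left | easy |].
      intros z [<- | Hz] HPz; [lra | specialize (Hmax z Hz HPz); lra].
    + right; exists p; repeat split; [now right | easy |].
      intros z [<- | Hz] HPz; [contradiction | auto].
Qed.

Lemma nondecreasing_Rmin (g : R -> R) (c : R) :
  nondecreasing g -> nondecreasing (fun z => Rmin (g z) c).
Proof. intros Hg a b Hab; apply Rle_min_compat_r, Hg, Hab. Qed.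

Section StepFunctionReduction.

Variable pts : list R.
Variable D : (R -> R) -> R.

Hypothesis D_ext :
  forall h k, (forall z, In z pts -> h z = k z) -> D h = D k.
Hypothesis D_linear :
  forall h k c, D (fun z => h z + c * k z) = D h + c * D k.
Hypothesis D_const : forall c, D (fun _ => c) = 0.
Hypothesis D_step_pts : forall t, In t pts -> D (ind_lt t) <= 0.

Lemma D_step (theta : R) : D (ind_lt theta) <= 0.
Proof.
  destruct (exists_max_in_list (fun z => z <= theta) pts)
    as [Habove | (p & Hp & Hpt & Hmax)].
  - rewrite (D_ext _ (fun _ => 1)), D_const; [lra |].
    intros z Hz; apply ind_lt_gt, Rnot_le_lt, Habove, Hz.
  - rewrite (D_ext _ (ind_lt p)); [now apply D_step_pts |].
    intros z Hz; destruct (Rle_dec z theta) as [Hzt | Hzt].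
    + rewrite !ind_lt_le; auto.
    + apply Rnot_le_lt in Hzt.
      rewrite !ind_lt_gt; [easy | lra | lra].
Qed.

(* Cutting g at the largest data point p below t splits off a nonnegative
   multiple of the step at p and leaves fewer data points below p. *)
Lemma D_nondecreasing_eventually_constant (k : nat) :
  forall (l : list R) (g : R -> R) (t : R),
  (length l <= k)%nat -> nondecreasing g ->
  (forall z, t <= z -> g z = g t) ->
  (forall z, In z pts -> z < t -> In z l) ->
  D g <= 0.
Proof.
  induction k as [|k IH]; intros l g t Hlen Hg Hconst Hcover;
    destruct (exists_max_in_list (fun z => z < t) pts)
      as [Habove | (p & Hp & Hpt & Hmax)].
  1, 3: rewrite (D_ext _ (fun _ => g t)), D_const; [lra |];
        intros z Hz; apply Hconst, Rnot_lt_le, Habove, Hz.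
  - destruct l; [destruct (Hcover p Hp Hpt) | simpl in Hlen; lia].
  - assert (Hgp : g p <= g t) by (apply Hg; lra).
    assert (Hsplit : forall z, In z pts ->
      g z = Rmin (g z) (g p) + (g t - g p) * ind_lt p z).
    { intros z Hz; destruct (Rle_dec z p) as [Hzp | Hzp].
      - rewrite ind_lt_le, Rmin_left by (auto; apply Hg, Hzp); ring.
      - assert (Htz : t <= z)
          by (destruct (Rlt_dec z t) as [Hzt |]; [specialize (Hmax z Hz Hzt) |]; lra).
        rewrite ind_lt_gt, Hconst, Rmin_right by lra; ring. }
    assert (Hcut : D (fun z => Rmin (g z) (g p)) <= 0).
    { apply (IH (remove Req_dec_T p l) _ p).
      - pose proof (remove_length_lt Req_dec_T l p (Hcover p Hp Hpt)); lia.
      - now apply nondecreasing_Rmin.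
      - intros z Hpz; rewrite Rmin_right, Rmin_right; auto with real.
      - intros z Hz Hzp; apply in_in_remove; [lra | apply Hcover; auto; lra]. }
    rewrite (D_ext g _ Hsplit), D_linear.
    pose proof (D_step p); nra.
Qed.

Lemma D_nondecreasing (g : R -> R) : nondecreasing g -> D g <= 0.
Proof.
  intros Hg.
  destruct (exists_max_in_list (fun _ => True) pts)
    as [Hnil | (t & _ & _ & Hmax)].
  - rewrite (D_ext _ (fun _ => 0)), D_const; [lra |].
    intros z Hz; now destruct (Hnil z Hz).
  - rewrite (D_ext _ (fun z => Rmin (g z) (g t))).
    + apply (D_nondecreasing_eventually_constant (length pts) pts _ t); auto.
      * now apply nondecreasing_Rmin.
      * intros z Htz; rewrite Rmin_right, Rmin_right; auto with real.
    + intros z Hz; rewrite Rmin_left; auto.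
Qed.

End StepFunctionReduction.

Definition data_points (n : nat) (x1 x2 y : nat -> R) : list R :=
  flat_map (fun i => x1 i :: x2 i :: y i :: nil) (seq 0 n).

Lemma In_data_points (n : nat) (x1 x2 y : nat -> R) (z : R) :
  In z (data_points n x1 x2 y) <->
  exists i, (i < n)%nat /\ (z = x1 i \/ z = x2 i \/ z = y i).
Proof.
  unfold data_points; rewrite in_flat_map; split.
  - intros (i & Hi & Hz); apply in_seq in Hi.
    exists i; split; [lia |]; simpl in Hz; intuition.
  - intros (i & Hi & Hz); exists i; split; [apply in_seq; lia |].
    simpl; intuition.
Qed.

Definition score_gap (alpha : R) (n : nat) (x1 x2 y : nat -> R) (g : R -> R) :=
  sum_f_R0 (fun i => score_g alpha g (x1 i) (y i) - score_g alpha g (x2 i) (y i))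
    (pred n).

Section ScoreGap.

Variables (alpha : R) (n : nat) (x1 x2 y : nat -> R).
Hypothesis hn : (1 <= n)%nat.

Lemma score_gap_ext (h k : R -> R) :
  (forall z, In z (data_points n x1 x2 y) -> h z = k z) ->
  score_gap alpha n x1 x2 y h = score_gap alpha n x1 x2 y k.
Proof.
  intros Hhk; apply sum_eq; intros i Hi; unfold score_g.
  assert (Hin : forall z, z = x1 i \/ z = x2 i \/ z = y i -> h z = k z)
    by (intros z Hz; apply Hhk, In_data_points; exists i; split; [lia | auto]).
  rewrite !Hin; auto.
Qed.

Lemma score_gap_linear (h k : R -> R) (c : R) :
  score_gap alpha n x1 x2 y (fun z => h z + c * k z) =
  score_gap alpha n x1 x2 y h + c * score_gap alpha n x1 x2 y k.
Proof.
  unfold score_gap; rewrite scal_sum, <- plus_sum.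
  apply sum_eq; intros i _; unfold score_g; ring.
Qed.

Lemma score_gap_const (c : R) : score_gap alpha n x1 x2 y (fun _ => c) = 0.
Proof. apply sum_eq_R0; intros i _; unfold score_g; ring. Qed.

Lemma emp_mean_le_iff (f1 f2 : nat -> R) :
  emp_mean n f1 <= emp_mean n f2 <->
  sum_f_R0 (fun i => f1 i - f2 i) (pred n) <= 0.
Proof.
  unfold emp_mean; rewrite minus_sum.
  assert (Hpos : 0 < / INR n) by (apply Rinv_0_lt_compat, lt_0_INR; lia).
  split; intros; nra.
Qed.

End ScoreGap.

Theorem mainTheorem8 (alpha : R) (n : nat) (x1 x2 y : nat -> R)
  (halpha : 0 < alpha < 1) (hn : (1 <= n)%nat)
  (hdom : forall theta : R,
     (exists i : nat, (i < n)%nat /\ (theta = x1 i \/ theta = x2 i \/ theta = y i)) ->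
     emp_mean n (fun i => SQ alpha theta (x1 i) (y i))
       <= emp_mean n (fun i => SQ alpha theta (x2 i) (y i))) :
  (forall theta : R,
     emp_mean n (fun i => SQ alpha theta (x1 i) (y i))
       <= emp_mean n (fun i => SQ alpha theta (x2 i) (y i)))
  /\
  (forall S : R -> R -> R, in_SQ_class alpha S ->
     emp_mean n (fun i => S (x1 i) (y i))
       <= emp_mean n (fun i => S (x2 i) (y i))).
Proof.
  pose proof (score_gap_ext alpha n x1 x2 y hn) as Hext.
  pose proof (score_gap_linear alpha n x1 x2 y) as Hlin.
  pose proof (score_gap_const alpha n x1 x2 y) as Hconst.
  (* SQ alpha theta is score_g alpha (ind_lt theta) by definition. *)
  assert (Hpts : forall t, In t (data_points n x1 x2 y) ->
      score_gap alpha n x1 x2 y (ind_lt t) <= 0)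
    by (intros t Ht; apply (emp_mean_le_iff n hn), hdom, In_data_points, Ht).
  split.
  - intros theta; apply (emp_mean_le_iff n hn).
    exact (D_step _ _ Hext Hconst Hpts theta).
  - intros S (g & Hg & _ & HS); apply (emp_mean_le_iff n hn).
    rewrite (sum_eq _
      (fun i => score_g alpha g (x1 i) (y i) - score_g alpha g (x2 i) (y i)))
      by (intros i _; rewrite !HS; reflexivity).
    exact (D_nondecreasing _ _ Hext Hlin Hconst Hpts g Hg).
Qed.
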